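(* Let $\mathbb{G}$ be an $E$-group such that $\mathbb{G}$ is compatible with the Cayley graph $\mathrm{Cay}(\mathbb{G}[\alpha])$ for every $\alpha\subsetneq E$. Then $\mathbb{G}$ is $3$-acyclic.
   Context: Let $E$ be a finite set. An $E$-group is a group $\mathbb{G}$ together with an inclusion $E\subseteq\mathbb{G}$ such that $E$ generates $\mathbb{G}$ and every $e\in E$ satisfies $e\neq1$, $e^2=1$. For $w=e_1\cdots e_n\in E^*$, $[w]_{\mathbb{G}}=e_1\cdots e_n$. For $\alpha\subseteq E$, $\mathbb{G}[\alpha]$ is the subgroup generated by $\alpha$. An $E$-graph is $\mathbb{H}=(V,(R_e)_{e\in E})$ with each $R_e\subseteq V\times V$ symmetric and every vertex having at most one $R_e$-neighbour. For $e\in E$, $\pi_e$ is the permutation of $V$ swapping each vertex with its $R_e$-neighbour if it has one and fixing it otherwise; for $w=e_1\cdots e_n$, $\pi_w=\pi_{e_n}\circ\cdots\circ\pi_{e_1}$. $\mathbb{G}$ is compatible with $\mathbb{H}$ if $[w]_{\mathbb{G}}=1$ implies $\pi_w=\mathrm{id}_V$ for all $w\in E^*$. $\mathrm{Cay}(\mathbb{G}[\alpha])$ is the $E$-graph on vertex set $\mathbb{G}[\alpha]$ with $R_e=\{(g,ge):g\in\mathbb{G}[\alpha]\}$ for $e\in\alpha$ and $R_e=\emptyset$ for $e\notin\alpha$. A coset cycle of length $n\ge2$ in $\mathbb{G}$ is a cyclically indexed family $(g_i,\alpha_i)_{i\in\mathbb{Z}_n}$ with $g_i\in\mathbb{G}$,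 $\alpha_i\subseteq E$, such that for all $i$: $g_{i+1}\in g_i\mathbb{G}[\alpha_i]$ and $g_i\mathbb{G}[\alpha_i\cap\alpha_{i-1}]\cap g_{i+1}\mathbb{G}[\alpha_i\cap\alpha_{i+1}]=\emptyset$. $\mathbb{G}$ is $N$-acyclic if it admits no coset cycle of length $n$ with $2\le n\le N$. *)

From mathcomp Require Import all_boot.
Set Implicit Arguments. Unset Strict Implicit. Unset Printing Implicit Defensive.

Record Grp := {
  carrier :> Type;
  gmul : carrier -> carrier -> carrier;
  gone : carrier;
  ginv : carrier -> carrier;
  gmulA : forall x y z, gmul x (gmul y z) = gmul (gmul x y) z;
  gmul1l : forall x, gmul gone x = x;
  gmulVl : forall x, gmul (ginv x) x = gone
}.

Definition word_eval (E : finType) (G : Grp) (iota : E -> G) (w : seq E) : G :=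
  foldr (fun e x => gmul (iota e) x) (gone G) w.

Definition is_Egroup (E : finType) (G : Grp) (iota : E -> G) : Prop :=
  injective iota /\
  (forall g : G, exists w : seq E, word_eval iota w = g) /\
  (forall e : E, iota e <> gone G /\ gmul (iota e) (iota e) = gone G).

(* Membership in the subgroup G[alpha] generated by alpha (the generators are
   involutions, so this is the set of values of words over alpha). *)
Definition in_gen (E : finType) (G : Grp) (iota : E -> G) (alpha : {set E}) (g : G) : Prop :=
  exists w : seq E, all (fun e => e \in alpha) w /\ word_eval iota w = g.

Definition in_coset (E : finType) (G : Grp) (iota : E -> G) (g : G) (alpha : {set E}) (x : G) : Prop :=
  exists h : G, in_gen iota alpha h /\ x = gmul g h.

Record EGraph (E : Type) := { vert : Type; edge : E -> vert -> vert -> Prop }.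
Arguments vert {E} _.
Arguments edge {E} _ _ _ _.


(* pi_e as a relation: v' is the R_e-neighbour of v, or v has none and v' = v.
   For an E-graph (R_e symmetric, at most one neighbour) this is the graph of the
   permutation pi_e. *)
Definition pi_e {E : Type} (H : EGraph E) (e : E) (v v' : vert H) : Prop :=
  edge H e v v' \/ ((~ exists u, edge H e v u) /\ v' = v).

(* pi_w = pi_{e_n} o ... o pi_{e_1} (e_1 is applied first), as a relation. *)
Fixpoint pi_w (E : Type) (H : EGraph E) (w : seq E) (v v' : vert H) : Prop :=
  match w with
  | [::] => v' = v
  | e :: w' => exists u, @pi_e E H e v u /\ @pi_w E H w' u v'
  end.
Arguments pi_w {E} H w v v'.

Definition compatible (E : finType) (G : Grp) (iota : E -> G) (H : EGraph E) : Prop :=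
  forall w : seq E, word_eval iota w = gone G ->
    forall v v' : vert H, pi_w H w v v' -> v' = v.

Definition Cay (E : finType) (G : Grp) (iota : E -> G) (alpha : {set E}) : EGraph E :=
  {| vert := { g : G | in_gen iota alpha g };
     edge := fun e x y => e \in alpha /\ proj1_sig y = gmul (proj1_sig x) (iota e) |}.

(* A coset cycle of length n >= 2, indexed by 'I_n (= Z_n, with successor ordS
   and predecessor ord_pred). *)
Definition coset_cycle (E : finType) (G : Grp) (iota : E -> G) (n : nat)
    (g : 'I_n -> G) (a : 'I_n -> {set E}) : Prop :=
  2 <= n /\
  forall i : 'I_n,
    in_coset iota (g i) (a i) (g (ordS i)) /\
    ~ (exists x : G,
         in_coset iota (g i) (a i :&: a (ord_pred i)) x /\
         in_coset iota (g (ordS i)) (a i :&: a (ordS i)) x).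

Definition acyclic (E : finType) (G : Grp) (iota : E -> G) (N : nat) : Prop :=
  forall n : nat, 2 <= n -> n <= N ->
    forall (g : 'I_n -> G) (a : 'I_n -> {set E}), ~ coset_cycle iota g a.

From mathcomp Require Import all_boot.
Set Implicit Arguments. Unset Strict Implicit. Unset Printing Implicit Defensive.

(* Walking along a word w in Cay(G[alpha]) multiplies the current vertex by the
   value of the letters of w that lie in alpha, the others being fixed points.
   So compatibility with Cay(G[alpha]) says: if [w] = 1 then the subword of w
   over alpha also evaluates to 1.  For a coset triangle g0 -h0-> g1 -h1-> g2
   -h2-> g0 with h_i in G[a_i], write h0 h1 h2 = 1 as a word and keep only its
   letters in a0 (all of them when a0 = E, where compatibility is not needed):
   h0 p q = 1 with p in G[a0 :&: a1] and q in G[a0 :&: a2], so g1 p = g0 q^-1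
   lies in both g0 G[a0 :&: a2] and g1 G[a0 :&: a1].  Coset cycles of length 2
   are the degenerate triangles g0 -> g1 -> g1 -> g0. *)

Section GroupLemmas.

Variable G : Grp.

Lemma gmulV (x : G) : gmul x (ginv x) = gone G.
Proof.
have invK y : gmul (ginv (ginv y)) (ginv y) = gone G := gmulVl (ginv y).
rewrite -(gmul1l (gmul x (ginv x))) -{1}(invK x) -gmulA (gmulA (ginv x)).
by rewrite gmulVl gmul1l invK.
Qed.

Lemma gmul1r (x : G) : gmul x (gone G) = x.
Proof. by rewrite -(gmulVl x) gmulA gmulV gmul1l. Qed.

Lemma gmul_eq1_l (x y : G) : gmul x y = gone G -> x = ginv y.
Proof. by move=> xy1; rewrite -(gmul1r x) -(gmulV y) gmulA xy1 gmul1l. Qed.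

Lemma gmul_eq1_r (x y : G) : gmul x y = gone G -> y = ginv x.
Proof. by move=> xy1; rewrite -(gmul1l y) -(gmulVl x) -gmulA xy1 gmul1r. Qed.

Lemma gmulI (x y z : G) : gmul x y = gmul x z -> y = z.
Proof. by move=> eq_xy; rewrite -(gmul1l y) -(gmulVl x) -gmulA eq_xy gmulA gmulVl gmul1l. Qed.

End GroupLemmas.

Section Words.

Variables (E : finType) (G : Grp) (iota : E -> G).

Lemma word_eval_cat (u v : seq E) :
  word_eval iota (u ++ v) = gmul (word_eval iota u) (word_eval iota v).
Proof. by elim: u => [|e u IHu] /=; rewrite ?gmul1l // -gmulA -IHu. Qed.

Lemma word_eval_cons (e : E) (u : seq E) :
  word_eval iota (e :: u) = gmul (iota e) (word_eval iota u).
Proof. by []. Qed.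

Hypothesis iota_invol : forall e, gmul (iota e) (iota e) = gone G.

Lemma word_eval_rev (u : seq E) : word_eval iota (rev u) = ginv (word_eval iota u).
Proof.
apply: gmul_eq1_r; elim: u => [|e u IHu]; first by rewrite /= gmul1l.
rewrite rev_cons -cats1 word_eval_cat word_eval_cons -gmulA (gmulA (word_eval iota u)).
by rewrite IHu gmul1l word_eval_cons gmul1r.
Qed.

Lemma in_gen1 (a : {set E}) : in_gen iota a (gone G).
Proof. by exists [::]. Qed.

Lemma in_gen_mul (a : {set E}) (x y : G) :
  in_gen iota a x -> in_gen iota a y -> in_gen iota a (gmul x y).
Proof.
by move=> [u [au <-]] [v [av <-]]; exists (u ++ v); rewrite all_cat au av word_eval_cat.
Qed.

Lemma in_gen_inv (a : {set E}) (x : G) : in_gen iota a x -> in_gen iota a (ginv x).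
Proof. by move=> [u [au <-]]; exists (rev u); rewrite all_rev au word_eval_rev. Qed.

Lemma in_gen_filter (a b : {set E}) (u : seq E) :
  all (mem b) u -> in_gen iota (a :&: b) (word_eval iota [seq e <- u | e \in a]).
Proof.
move=> bu; exists [seq e <- u | e \in a]; split=> //.
by rewrite all_filter; apply/allP=> e eu; apply/implyP=> ae; rewrite inE ae; exact: (allP bu e eu).
Qed.

Lemma in_coset_refl (a : {set E}) (g : G) : in_coset iota g a g.
Proof. by exists (gone G); rewrite gmul1r; split=> //; apply: in_gen1. Qed.

End Words.

Section CayleyGraph.

Variables (E : finType) (G : Grp) (iota : E -> G) (alpha : {set E}).

Lemma pi_w_Cay (w : seq E) (v : vert (Cay iota alpha)) :
  exists v', pi_w (Cay iota alpha) w v v' /\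
    sval v' = gmul (sval v) (word_eval iota [seq e <- w | e \in alpha]).
Proof.
elim: w v => [|e w IHw] v; first by exists v; rewrite gmul1r.
rewrite /=; case: ifP => ealpha.
- have gen_ve : in_gen iota alpha (gmul (sval v) (iota e)).
    apply: in_gen_mul (svalP v) _.
    by exists [:: e]; rewrite /= ealpha gmul1r.
  have [v' [walk_v' val_v']] := IHw (exist _ _ gen_ve).
  exists v'; split; first by exists (exist _ _ gen_ve); split=> //; left.
  by rewrite val_v' /= -gmulA.
- have [v' [walk_v' val_v']] := IHw v.
  exists v'; split=> //; exists v; split=> //.
  by right; split=> // -[u [/=]]; rewrite ealpha.
Qed.

Lemma compatible_Cay_filter (w : seq E) :
  compatible iota (Cay iota alpha) ->
  word_eval iota w = gone G -> word_eval iota [seq e <- w | e \in alpha] = gone G.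
Proof.
move=> compat w1.
have [v' [walk_v' val_v']] := pi_w_Cay w (exist _ (gone G) (in_gen1 iota alpha)).
by rewrite (compat w w1 _ _ walk_v') /= gmul1l in val_v'.
Qed.

End CayleyGraph.

Lemma word_eval_filter_eq1 (E : finType) (G : Grp) (iota : E -> G) :
  (forall alpha : {set E}, alpha \proper [set: E] -> compatible iota (Cay iota alpha)) ->
  forall (alpha : {set E}) (w : seq E),
    word_eval iota w = gone G -> word_eval iota [seq e <- w | e \in alpha] = gone G.
Proof.
move=> compat alpha w w1; have [alphaT|alpha_proper] := eqVneq alpha setT.
  by rewrite alphaT (eq_filter (fun e => in_setT e)) filter_predT.
by apply: compatible_Cay_filter w1; apply: compat; rewrite properT.
Qed.

Section CosetTriangle.

Variables (E : finType) (G : Grp) (iota : E -> G).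
Hypothesis iota_invol : forall e, gmul (iota e) (iota e) = gone G.
Hypothesis filter_eq1 : forall (alpha : {set E}) (w : seq E),
  word_eval iota w = gone G -> word_eval iota [seq e <- w | e \in alpha] = gone G.

Lemma coset_triangle_meet (g0 g1 g2 : G) (a0 a1 a2 : {set E}) :
  in_coset iota g0 a0 g1 -> in_coset iota g1 a1 g2 -> in_coset iota g2 a2 g0 ->
  exists x, in_coset iota g0 (a0 :&: a2) x /\ in_coset iota g1 (a0 :&: a1) x.
Proof.
move=> [_ [[u0 [a0u0 <-]] ->]] [_ [[u1 [a1u1 <-]] ->]] [_ [[u2 [a2u2 <-]] g0E]].
have triangle1 : word_eval iota (u0 ++ u1 ++ u2) = gone G.
  by apply: (gmulI (x := g0)); rewrite gmul1r !word_eval_cat !gmulA -g0E.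
set p := word_eval iota [seq e <- u1 | e \in a0].
set q := word_eval iota [seq e <- u2 | e \in a0].
have := filter_eq1 a0 triangle1.
rewrite !filter_cat (all_filterP a0u0) !word_eval_cat -/p -/q gmulA => /gmul_eq1_l pq.
exists (gmul (gmul g0 (word_eval iota u0)) p); split.
- exists (ginv q); split; first by apply: in_gen_inv => //; apply: in_gen_filter.
  by rewrite -gmulA pq.
- by exists p; split=> //; apply: in_gen_filter.
Qed.

End CosetTriangle.

Theorem mainTheorem6 (E : finType) (G : Grp) (iota : E -> G) :
  is_Egroup iota ->
  (forall alpha : {set E}, alpha \proper [set: E] -> compatible iota (Cay iota alpha)) ->
  acyclic iota 3.
Proof.
move=> [_ [_ iota_inv1]] compat.
have iota_invol e : gmul (iota e) (iota e) = gone G := (iota_inv1 e).2.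
have meet := coset_triangle_meet iota_invol (word_eval_filter_eq1 compat).
move=> n n_ge2 n_le3 g a [_ cyc].
case: n n_ge2 n_le3 g a cyc => [|[|[|[|n]]]] // _ _ g a cyc.
- pose i0 := @Ordinal 2 0 isT; pose i1 := @Ordinal 2 1 isT.
  have [step0 no_meet] := cyc i0; have [step1 _] := cyc i1.
  have e01 : ordS i0 = i1 by apply: val_inj.
  have e10 : ordS i1 = i0 by apply: val_inj.
  have p01 : ord_pred i0 = i1 by apply: val_inj.
  rewrite e01 p01 in no_meet; rewrite e01 in step0; rewrite e10 in step1.
  by apply: no_meet; apply: meet step0 (in_coset_refl _ _ _) step1.
- pose i0 := @Ordinal 3 0 isT; pose i1 := @Ordinal 3 1 isT; pose i2 := @Ordinal 3 2 isT.
  have [step0 no_meet] := cyc i0; have [step1 _] := cyc i1; have [step2 _] := cyc i2.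
  have e01 : ordS i0 = i1 by apply: val_inj.
  have e12 : ordS i1 = i2 by apply: val_inj.
  have e20 : ordS i2 = i0 by apply: val_inj.
  have p02 : ord_pred i0 = i2 by apply: val_inj.
  rewrite e01 p02 in no_meet; rewrite e01 in step0; rewrite e12 in step1; rewrite e20 in step2.
  by apply: no_meet; apply: meet step0 step1 step2.
Qed.
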